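(* Let $m,n\in\mathbb{N}$ be such that ${\rm SR}(m,n)$ has at least one vertex. Then the smallest eigenvalue of ${\rm SR}(m,n)$ equals $\max\left(-n,\,-\binom{m}{2}\right)$.
   Context: $\mathbb{N}=\{0,1,2,\dots\}$. For $m,n\in\mathbb{N}$, ${\rm SR}(m,n)$ is the graph whose vertices are the vectors in $\mathbb{N}^m$ with coordinate sum $n$, two vertices being adjacent when they differ in precisely two coordinate positions. Eigenvalues are those of the adjacency matrix. *)

From HB Require Import structures.
From mathcomp Require Import all_boot all_order all_algebra.
Set Implicit Arguments. Unset Strict Implicit. Unset Printing Implicit Defensive.
Import Order.TTheory GRing.Theory Num.Theory.
Local Open Scope ring_scope.

(* Each coordinate
   is at most n, so we represent a vertex as a function 'I_m -> 'I_n.+1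
   (coordinate values 0..n) whose coordinate sum (in nat) is n. *)
Definition SRv (m n : nat) : predArgType :=
  {f : {ffun 'I_m -> 'I_n.+1} | (\sum_(i < m) (f i : nat))%N == n}.

Definition SR_adj (m n : nat) (u v : SRv m n) : bool :=
  #|[set i : 'I_m | val u i != val v i]| == 2%N.

Definition SR_adjmx (R : nzRingType) (m n : nat) : 'M[R]_#|SRv m n| :=
  \matrix_(i, j) (SR_adj (enum_val i) (enum_val j))%:R.

Definition smallest_eigenvalue (R : realFieldType) (k : nat) (A : 'M[R]_k) (lam : R) :=
  eigenvalue A lam /\ forall a, eigenvalue A a -> lam <= a.

(* Both bounds come from writing the adjacency matrix as A = N^T N - k I, where N
   is the incidence matrix of a family of cliques such that every vertex lies in
   exactly k of them and every edge in exactly one: then A + k I is positive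
   semidefinite, and every nonzero vector killed by N is a (-k)-eigenvector.
   SR(m,n) has two such families: the cliques {w + t e_i | i < m} (t > 0), with
   k = n, and the cliques of vertices agreeing outside a pair of coordinates,
   with k = C(m,2).  Kernel vectors are alternating sums over permutations,
   f(u) = sum_s sgn(s) [u + a = s + b]: on each clique the contributing
   permutations cancel in pairs under a transposition, and for a suitable
   choice of a and b the vector f is nonzero, provided n <= C(m,2) for the
   first family, resp. n >= C(m,2) for the second. *)

From HB Require Import structures.
From mathcomp Require Import all_boot all_order all_algebra all_fingroup.
From mathcomp Require Import zify lra.
Set Implicit Arguments. Unset Strict Implicit. Unset Printing Implicit Defensive.
Import Order.TTheory GRing.Theory Num.Theory.

Section RowNorm.
Variables (R : realFieldType) (q : nat).
Local Open Scope ring_scope.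

Lemma row_norm2_ge0 (w : 'rV[R]_q) : 0 <= (w *m w^T) 0 0.
Proof. by rewrite mxE sumr_ge0 // => i _; rewrite [_^T _ _]mxE -expr2 sqr_ge0. Qed.

Lemma row_norm2_gt0 (w : 'rV[R]_q) : w != 0 -> 0 < (w *m w^T) 0 0.
Proof.
move=> w0; have [j wj] : exists j, w 0 j != 0.
  apply/existsP; apply: contraR w0 => /existsPn w_0.
  by apply/eqP/rowP => j; rewrite mxE; apply/eqP/negPn.
rewrite mxE; under eq_bigr => i _ do rewrite mxE -expr2.
by rewrite (bigD1 j) //= ltr_wpDr ?exprn_even_gt0 ?wj ?orbT ?sumr_ge0 // => i _; rewrite sqr_ge0.
Qed.

End RowNorm.

Section GramEigenvalues.
Local Open Scope ring_scope.
Variables (R : realFieldType) (p q : nat) (N : 'M[R]_(p, q)) (A : 'M[R]_q) (k : R).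
Hypothesis gram : N^T *m N = A + k%:M.

Lemma gram_eigenvalue_ge a : eigenvalue A a -> - k <= a.
Proof.
case/eigenvalueP=> v vA v0.
have form : (v *m N^T) *m (v *m N^T)^T = (a + k) *: (v *m v^T).
  by rewrite trmx_mul trmxK !mulmxA -(mulmxA v) gram mulmxDr vA mul_mx_scalar
    -scalerDl scalemxAl.
have := row_norm2_ge0 (v *m N^T).
rewrite form mxE (pmulr_lge0 _ (row_norm2_gt0 v0)); lra.
Qed.

Lemma gram_kernel_eigenvalue (x : 'rV[R]_q) :
  x != 0 -> x *m N^T = 0 -> eigenvalue A (- k).
Proof.
move=> x0 xN; apply/eigenvalueP; exists x => //.
have -> : A = N^T *m N - k%:M by rewrite gram addrK.
by rewrite mulmxBr mulmxA xN mul0mx sub0r mul_mx_scalar scaleNr.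
Qed.

End GramEigenvalues.

Section BlockDesign.
Local Open Scope ring_scope.

Lemma reindex_enum_rank (M : nmodType) (T : finType) (F : 'I_#|T| -> M) :
  \sum_i F i = \sum_x F (enum_rank x).
Proof.
by rewrite (reindex enum_rank) //; exists enum_val => x _; [exact: enum_rankK | exact: enum_valK].
Qed.

Variables (R : realFieldType) (V C : finType) (adj : rel V) (blk : C -> pred V) (k : nat).

Definition adjacency_mx : 'M[R]_#|V| := \matrix_(i, j) (adj (enum_val i) (enum_val j))%:R.
Definition incidence_mx : 'M[R]_(#|C|, #|V|) :=
  \matrix_(c, i) (blk (enum_val c) (enum_val i))%:R.

Hypothesis common_blocks :
  forall u v, #|[pred c | blk c u && blk c v]| = (adj u v + k * (u == v))%N.

Lemma incidence_gram : incidence_mx^T *m incidence_mx = adjacency_mx + k%:R%:M.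
Proof.
apply/matrixP => i j; rewrite /incidence_mx !mxE reindex_enum_rank.
set u := enum_val i; set v := enum_val j.
have -> : (i == j) = (u == v) by rewrite (inj_eq enum_val_inj).
transitivity (#|[pred c | blk c u && blk c v]|%:R : R).
  rewrite -[in RHS]sum1_card natr_sum [RHS]big_mkcond; apply: eq_bigr => c _ /=.
  by rewrite !mxE enum_rankK inE /=; case: (blk c u); case: (blk c v); rewrite ?mulr0 ?mulr1.
by rewrite (common_blocks u v) natrD natrM mulr_natr.
Qed.

Lemma blocks_eigenvalue_ge a : eigenvalue adjacency_mx a -> - k%:R <= a.
Proof. by move/(gram_eigenvalue_ge incidence_gram). Qed.

Lemma blocks_kernel_eigenvalue (X : V -> R) u0 :
  X u0 != 0 -> (forall c, \sum_(u | blk c u) X u = 0) ->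
  eigenvalue adjacency_mx (- k%:R).
Proof.
move=> Xu0 X_blk.
apply: (gram_kernel_eigenvalue incidence_gram (x := \row_j X (enum_val j))).
  by apply: contra_neq Xu0 => /rowP/(_ (enum_rank u0)); rewrite !mxE enum_rankK.
apply/rowP => c; rewrite !mxE -[RHS](X_blk (enum_val c)) [RHS]big_mkcond reindex_enum_rank.
by apply: eq_bigr => u _; rewrite !mxE enum_rankK; case: (blk _ u); rewrite ?mulr0 ?mulr1.
Qed.

End BlockDesign.

Lemma card_le1_exists (T : finType) (P : pred T) :
  {in P &, forall x y, x = y} -> #|P| = [exists x, P x].
Proof.
move=> P_uniq; have P_le1 : #|P| <= 1 by apply/card_le1_eqP => x y Px Py; apply: P_uniq.
case: existsP => [[x Px]|no_x]; apply/eqP; rewrite eqn_leq ?P_le1.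
  by apply/card_gt0P; exists x.
by rewrite leqNgt andbT; apply/negP => /card_gt0P[x Px]; apply: no_x; exists x.
Qed.

Lemma sum_nat_of_bool (T : finType) (P : pred T) : \sum_x (P x : nat) = #|P|.
Proof.
by rewrite -sum1_card [RHS]big_mkcond; apply: eq_bigr => x _; rewrite unfold_in; case: (P x).
Qed.

Lemma sum_ord_indicator (N a : nat) : \sum_(t < N.+1) ((0 < t) && (t <= a) : nat) = minn a N.
Proof.
elim: N => [|N IHN]; first by rewrite big_ord_recr big_ord0.
by rewrite big_ord_recr /= IHN; case: leqP; lia.
Qed.

Section Vertices.
Variables m n : nat.
Implicit Types u v : SRv m n.

Definition entry u (i : 'I_m) : nat := val u i.

Lemma sum_entry u : \sum_i entry u i = n.
Proof. by apply/eqP; case: u. Qed.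

Lemma entry_inj u v : entry u =1 entry v -> u = v.
Proof. by move=> uv; apply/val_inj/ffunP => i; apply/val_inj/uv. Qed.

Lemma entry_le u i : entry u i <= n.
Proof. by rewrite -ltnS ltn_ord. Qed.

Lemma exists_vertex (g : 'I_m -> nat) : \sum_i g i = n -> exists u, entry u =1 g.
Proof.
move=> sum_g; have g_le i : g i < n.+1 by rewrite ltnS -sum_g (bigD1 i) //= leq_addr.
have sum_f : \sum_i (([ffun i => Ordinal (g_le i)] : {ffun 'I_m -> 'I_n.+1}) i : nat) == n.
  by rewrite -[in X in _ == X]sum_g; apply/eqP/eq_bigr => i _; rewrite ffunE.
pose f_in_SR (f : {ffun 'I_m -> 'I_n.+1}) := \sum_(i < m) (f i : nat) == n.
by exists (exist f_in_SR _ sum_f) => i; rewrite /entry /= ffunE.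
Qed.

Definition diffset u v := [set i | entry u i != entry v i].

Lemma SR_adjE u v : SR_adj u v = (#|diffset u v| == 2).
Proof. by []. Qed.

Lemma diffset_eq0 u v : (diffset u v == set0) = (u == v).
Proof.
apply/eqP/eqP => [uv | ->]; last by apply/setP => i; rewrite !inE eqxx.
by apply: entry_inj => i; apply/eqP; move/setP/(_ i): uv; rewrite !inE => /negbFE.
Qed.

Lemma sum_entry_diffset u v (A : {set 'I_m}) : diffset u v \subset A ->
  \sum_(i in A) entry u i = \sum_(i in A) entry v i.
Proof.
move=> sub_uv; have off_A : \sum_(i | i \notin A) entry u i = \sum_(i | i \notin A) entry v i.
  apply: eq_bigr => i iA; apply/eqP; apply: contraNT iA => uv_i.
  by apply: (subsetP sub_uv); rewrite inE.
have := sum_entry u; rewrite -(sum_entry v) (bigID (mem A)) [in RHS](bigID (mem A)) /= off_A.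
exact: addIn.
Qed.

Lemma diffset_card_neq1 u v : #|diffset u v| != 1.
Proof.
apply/negP => /cards1P[a uv_a].
have := sum_entry_diffset (subxx (diffset u v)); rewrite uv_a !big_set1 => uv_eq.
have : a \in diffset u v by rewrite uv_a set11.
by rewrite inE uv_eq eqxx.
Qed.

End Vertices.

Section ShiftCliques.
Variables m n : nat.
Implicit Types u v : SRv m n.

(* (t, w) indexes the clique {w + t e_i | i < m}, a genuine clique only when t > 0. *)
Definition shift_index := ('I_n.+1 * {ffun 'I_m -> 'I_n.+1})%type.
Implicit Types x : shift_index.

Definition in_shift x (i : 'I_m) u := [forall k, entry u k == x.2 k + x.1 * (k == i)].
Definition shift_clique x u := (0 < x.1) && [exists i, in_shift x i u].

Lemma in_shiftP x i u :
  reflect (forall k, entry u k = x.2 k + x.1 * (k == i)) (in_shift x i u).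
Proof. by apply: (iffP forallP) => uk k; apply/eqP. Qed.

Lemma in_shift_center x i j u : 0 < x.1 -> in_shift x i u -> in_shift x j u -> i = j.
Proof.
move=> t_gt0 /in_shiftP/(_ i) ui /in_shiftP/(_ i); rewrite ui eqxx.
by case: eqP => // _; lia.
Qed.

Definition shift_base u i (t : nat) : {ffun 'I_m -> 'I_n.+1} :=
  [ffun k => inord (entry u k - t * (k == i))].

Lemma shift_baseE u i t k : shift_base u i t k = entry u k - t * (k == i) :> nat.
Proof. by rewrite ffunE inordK // ltnS (leq_trans (leq_subr _ _) (entry_le _ _)). Qed.

Lemma in_shift_base x i u : in_shift x i u -> x.1 <= entry u i /\ x.2 = shift_base u i x.1.
Proof.
move/in_shiftP=> uk; split; first by rewrite uk eqxx muln1 leq_addl.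
by apply/ffunP => k; apply/val_inj => /=; rewrite shift_baseE uk addnK.
Qed.

Lemma in_shift_shift_base u i (t : 'I_n.+1) : t <= entry u i -> in_shift (t, shift_base u i t) i u.
Proof.
move=> t_le; apply/in_shiftP => k /=; rewrite shift_baseE.
by case: eqP => [->|_]; rewrite ?muln1 ?subnK ?muln0 ?subn0 ?addn0.
Qed.

Lemma card_shift_cliques u : #|[pred x | shift_clique x u]| = n.
Proof.
rewrite -sum_nat_of_bool.
transitivity (\sum_i \sum_(t < n.+1) ((0 < t) && (t <= entry u i) : nat)).
  rewrite (eq_bigr (fun x => \sum_i ((0 < x.1) && in_shift x i u : nat))); last first.
    move=> x _ /=; rewrite sum_nat_of_bool card_le1_exists; last first.
      by move=> i j /andP[t_gt0 ui] /andP[_ uj]; apply: in_shift_center uj.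
    by congr nat_of_bool; rewrite /shift_clique; case: posnP => //= _; apply/esym/existsP => -[].
  rewrite exchange_big; apply: eq_bigr => i _.
  pose in_shift_at (t : 'I_n.+1) w := (0 < t) && in_shift (t, w) i u : nat.
  rewrite -(pair_big xpredT xpredT in_shift_at) /=.
  apply: eq_bigr => t _.
  rewrite sum_nat_of_bool card_le1_exists; last first.
    by move=> w w' /andP[_ /in_shift_base[_ /= ->]] /andP[_ /in_shift_base[_ /= ->]].
  congr nat_of_bool; case: (posnP t) => [->|t_gt0]; first by apply/existsP => -[w].
  apply/existsP/idP => [[w /andP[_ /in_shift_base[]]] //|t_le].
  by exists (shift_base u i t); apply: in_shift_shift_base.
rewrite -[RHS](sum_entry u); apply: eq_bigr => i _.
by rewrite sum_ord_indicator; apply/minn_idPl/entry_le.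
Qed.

Section TwoCenters.
Variables (x : shift_index) (i j : 'I_m) (u v : SRv m n).
Hypotheses (t_gt0 : 0 < x.1) (ij : i != j) (ui : in_shift x i u) (vj : in_shift x j v).

Lemma in_shift_entry_lt k : (entry v k < entry u k) = (k == i).
Proof.
move/in_shiftP: ui => ->; move/in_shiftP: vj => ->.
case: (eqVneq k i) => [->|ki]; [rewrite (negbTE ij) | case: (eqVneq k j) => [->|kj]];
  by rewrite /= ?eqxx ?muln0 ?muln1; lia.
Qed.

Lemma in_shift_diffset : diffset u v = [set i; j].
Proof.
apply/setP => k; rewrite !inE; move/in_shiftP: ui => ->; move/in_shiftP: vj => ->.
case: (eqVneq k i) => [->|ki]; [rewrite (negbTE ij) | case: (eqVneq k j) => [->|kj]];
  by rewrite /= ?eqxx ?muln0 ?muln1; lia.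
Qed.

End TwoCenters.

Lemma shift_clique_centers x u v : u != v -> shift_clique x u -> shift_clique x v ->
  exists i j, [/\ i != j, in_shift x i u & in_shift x j v].
Proof.
move=> uv /andP[_ /existsP[i ui]] /andP[_ /existsP[j vj]]; exists i, j; split=> //.
apply: contraNneq uv => eq_ij; apply/eqP/entry_inj => k.
by move/in_shiftP: ui => ->; move/in_shiftP: vj => ->; rewrite eq_ij.
Qed.

Lemma common_shift_clique_uniq u v : u != v ->
  {in [pred x | shift_clique x u && shift_clique x v] &, forall x y, x = y}.
Proof.
move=> uv x y /andP[xu xv] /andP[yu yv].
have [i [j [ij ui vj]]] := shift_clique_centers uv xu xv.
have [i' [j' [ij' ui' vj']]] := shift_clique_centers uv yu yv.
have [t_gt0 t'_gt0] : 0 < x.1 /\ 0 < y.1 by case/andP: xu; case/andP: yu.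
have eq_i : i' = i.
  apply/eqP; rewrite -(in_shift_entry_lt t_gt0 ij ui vj).
  by rewrite (in_shift_entry_lt t'_gt0 ij' ui' vj') eqxx.
rewrite {}eq_i in ij' ui' vj'.
have eq_t : x.1 = y.1.
  apply/val_inj; move/in_shiftP/(_ i): ui; move/in_shiftP/(_ i): vj.
  move/in_shiftP/(_ i): ui'; move/in_shiftP/(_ i): vj'.
  by rewrite eqxx (negbTE ij) (negbTE ij') /=; lia.
have eq_w : x.2 = y.2 by move: ui ui' => /in_shift_base[_ ->] /in_shift_base[_ ->]; rewrite eq_t.
by case: x y eq_t eq_w {xu xv yu yv ui vj ui' vj' t_gt0 t'_gt0} => [t w] [t' w'] /= -> ->.
Qed.

Lemma shift_clique_of_diffset2 u v i j :
  i != j -> diffset u v = [set i; j] -> entry v i < entry u i ->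
  exists x, shift_clique x u && shift_clique x v.
Proof.
move=> ij uv_ij vu_i.
have sum_ij : entry u i + entry u j = entry v i + entry v j.
  have := @sum_entry_diffset _ _ u v [set i; j]; rewrite uv_ij subxx.
  by rewrite !big_setU1 ?big_set1 ?inE //= => ->.
have off k : k != i -> k != j -> entry u k = entry v k.
  move=> ki kj; have : k \notin diffset u v by rewrite uv_ij !inE negb_or ki.
  by rewrite inE negbK => /eqP.
have t_lt : entry u i - entry v i < n.+1 by rewrite ltnS (leq_trans (leq_subr _ _) (entry_le _ _)).
pose x : shift_index := (Ordinal t_lt, shift_base u i (entry u i - entry v i)).
have t_gt0 : 0 < x.1 by rewrite /= subn_gt0.
exists x; rewrite /shift_clique t_gt0; apply/andP; split; apply/existsP.
  by exists i; apply: in_shift_shift_base; rewrite /= leq_subr.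
exists j; apply/in_shiftP => k /=; rewrite shift_baseE.
case: (eqVneq k i) => [->|ki]; first by rewrite (negbTE ij) /=; lia.
case: (eqVneq k j) => [->|kj]; first by rewrite /= muln0 muln1; lia.
by rewrite /= !muln0 subn0 addn0 off.
Qed.

Lemma exists_common_shift_clique u v : u != v ->
  [exists x, shift_clique x u && shift_clique x v] = SR_adj u v.
Proof.
move=> uv; rewrite SR_adjE; apply/existsP/idP => [[x /andP[xu xv]]|].
  have [i [j [ij ui vj]]] := shift_clique_centers uv xu xv.
  by rewrite (in_shift_diffset _ ij ui vj) ?cards2 ?ij //; case/andP: xu.
case/cards2P => a [b [ab uv_ab]].
have : a \in diffset u v by rewrite uv_ab !inE eqxx.
rewrite inE neq_ltn orbC => /orP[vu_a | uv_a]; first exact: shift_clique_of_diffset2 ab uv_ab vu_a.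
have sum_ab : entry u a + entry u b = entry v a + entry v b.
  have := @sum_entry_diffset _ _ u v [set a; b]; rewrite uv_ab subxx.
  by rewrite !big_setU1 ?big_set1 ?inE //= => ->.
have vu_b : entry v b < entry u b by lia.
have uv_ba : diffset u v = [set b; a] by rewrite uv_ab setUC.
by apply: shift_clique_of_diffset2 uv_ba vu_b; rewrite eq_sym.
Qed.

Lemma common_shift_cliques u v :
  #|[pred x | shift_clique x u && shift_clique x v]| = SR_adj u v + n * (u == v).
Proof.
have [<-|uv] := eqVneq u v.
  rewrite SR_adjE; have /eqP-> : diffset u u == set0 by rewrite diffset_eq0.
  rewrite cards0 /= muln1 -[in RHS](card_shift_cliques u).
  by apply: eq_card => x; rewrite !inE andbb.
rewrite card_le1_exists ?exists_common_shift_clique ?muln0 ?addn0 //.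
exact: common_shift_clique_uniq.
Qed.

End ShiftCliques.

Section PairCliques.
Variables m n : nat.
Implicit Types u v : SRv m n.

(* (P, r) indexes the clique of vertices that agree with r outside the pair P;
   r is required to vanish on P so that each clique has a single index. *)
Definition pair_index := ({set 'I_m} * {ffun 'I_m -> 'I_n.+1})%type.
Implicit Types x : pair_index.

Definition pair_clique x u :=
  (#|x.1| == 2) && [forall k, if k \in x.1 then x.2 k == ord0 else entry u k == x.2 k].

Definition pair_base u (P : {set 'I_m}) : {ffun 'I_m -> 'I_n.+1} :=
  [ffun k => if k \in P then ord0 else val u k].

Lemma pair_clique_base x u : pair_clique x u -> x.2 = pair_base u x.1.
Proof.
case/andP=> _ /forallP xu; apply/ffunP => k; rewrite ffunE.
by move: (xu k); case: (k \in x.1) => /eqP // xu_k; apply/val_inj.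
Qed.

Lemma pair_clique_pair_base u (P : {set 'I_m}) : #|P| == 2 -> pair_clique (P, pair_base u P) u.
Proof.
by move=> P2; rewrite /pair_clique P2; apply/forallP => k; rewrite ffunE; case: (k \in P).
Qed.

Lemma card_pair_cliques u : #|[pred x | pair_clique x u]| = 'C(m, 2).
Proof.
pose in_pair_clique (P : {set 'I_m}) r := pair_clique (P, r) u : nat.
rewrite -sum_nat_of_bool -(pair_big xpredT xpredT in_pair_clique) /=.
transitivity (\sum_(P : {set 'I_m}) (#|P| == 2 : nat)); last first.
  by rewrite sum_nat_of_bool -[m in RHS]card_ord -card_draws; apply: eq_card => P; rewrite inE.
apply: eq_bigr => P _; rewrite sum_nat_of_bool card_le1_exists; last first.
  by move=> r r' /pair_clique_base /= -> /pair_clique_base /= ->.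
congr nat_of_bool; apply/existsP/idP => [[r /andP[]] //|P2].
by exists (pair_base u P); apply: pair_clique_pair_base.
Qed.

Lemma pair_clique_diffset x u v : u != v -> pair_clique x u -> pair_clique x v ->
  diffset u v = x.1.
Proof.
move=> uv /andP[x2 /forallP xu] /andP[_ /forallP xv].
have sub_x : diffset u v \subset x.1.
  apply/subsetP => k; rewrite inE; apply: contraNT => kx.
  by move: (xu k) (xv k); rewrite (negbTE kx) => /eqP-> /eqP->.
apply/eqP; rewrite eqEcard sub_x (eqP x2) /=.
have := subset_leq_card sub_x; rewrite (eqP x2) leq_eqVlt ltnS leq_eqVlt ltnS leqn0.
rewrite (negbTE (diffset_card_neq1 u v)) cards_eq0 diffset_eq0 (negbTE uv).
by case/orP => [/eqP->|].
Qed.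

Lemma common_pair_clique_uniq u v : u != v ->
  {in [pred x | pair_clique x u && pair_clique x v] &, forall x y, x = y}.
Proof.
move=> uv [P r] [Q s] /andP[xu xv] /andP[yu yv].
have eq_PQ : P = Q by rewrite -[P](pair_clique_diffset uv xu xv) (pair_clique_diffset uv yu yv).
by move: (pair_clique_base xu) (pair_clique_base yu) => /= -> ->; rewrite eq_PQ.
Qed.

Lemma exists_common_pair_clique u v : u != v ->
  [exists x, pair_clique x u && pair_clique x v] = SR_adj u v.
Proof.
move=> uv; rewrite SR_adjE; apply/existsP/idP => [[x /andP[xu xv]]|uv2].
  by rewrite (pair_clique_diffset uv xu xv); case/andP: xu.
exists (diffset u v, pair_base u (diffset u v)); rewrite pair_clique_pair_base //=.
rewrite /pair_clique uv2; apply/forallP => k /=; rewrite ffunE.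
by case: ifP => [-> //| kd]; rewrite kd; move/negbT: kd; rewrite inE negbK eq_sym.
Qed.

Lemma common_pair_cliques u v :
  #|[pred x | pair_clique x u && pair_clique x v]| = SR_adj u v + 'C(m, 2) * (u == v).
Proof.
have [<-|uv] := eqVneq u v.
  rewrite SR_adjE; have /eqP-> : diffset u u == set0 by rewrite diffset_eq0.
  rewrite cards0 /= muln1 -[in RHS](card_pair_cliques u).
  by apply: eq_card => x; rewrite !inE andbb.
rewrite card_le1_exists ?exists_common_pair_clique ?muln0 ?addn0 //.
exact: common_pair_clique_uniq.
Qed.

End PairCliques.

Lemma sum_ord_id (m : nat) : \sum_(k < m) k = 'C(m, 2).
Proof. by rewrite -bin2_sum big_mkord. Qed.

Lemma sum_perm (m : nat) (s : 'S_m) : \sum_(k < m) s k = 'C(m, 2).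
Proof. by rewrite -sum_ord_id [RHS](reindex_inj (@perm_inj _ s)). Qed.

Section AlternatingVectors.
Variables (R : realFieldType) (m n : nat).
Implicit Types u v : SRv m n.
Local Open Scope ring_scope.

Lemma signed_sum_tperm_invariant (P : pred 'S_m) (p q : 'I_m) :
  p != q -> (forall s, P (tperm p q * s)%g = P s) ->
  \sum_(s : 'S_m) (-1) ^+ s * (P s)%:R = 0 :> R.
Proof.
move=> pq P_tperm; apply/eqP; rewrite -[_ == 0](@mulrn_eq0 _ _ 2) mulr2n.
apply/eqP; rewrite {1}(reindex_inj (mulgI (tperm p q))) -big_split /=.
apply: big1 => s _; rewrite P_tperm odd_permM odd_tperm pq.
by case: (odd_perm s); rewrite /= ?expr1 ?expr0 ?mulN1r ?mul1r ?addNr ?addrN.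
Qed.

Definition matches (a b : 'I_m -> nat) u (s : 'S_m) :=
  [forall k, (entry u k + a k == s k + b k)%N].

Definition alt_vector a b u : R := \sum_(s : 'S_m) (-1) ^+ s * (matches a b u s)%:R.

Lemma matches_inj a b s u v : matches a b u s -> matches a b v s -> u = v.
Proof.
move=> /forallP us /forallP vs; apply: entry_inj => k.
by apply/eqP; rewrite -(eqn_add2r (a k)) (eqP (us k)) (eqP (vs k)).
Qed.

Lemma sum_alt_vector (B : pred (SRv m n)) a b :
  \sum_(u | B u) alt_vector a b u =
  \sum_(s : 'S_m) (-1) ^+ s * #|[pred u | B u && matches a b u s]|%:R.
Proof.
rewrite exchange_big; apply: eq_bigr => s _ /=; rewrite -sum_nat_of_bool natr_sum mulr_sumr.
rewrite big_mkcond; apply: eq_bigr => u _ /=.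
by case: (B u); rewrite ?mulr0 ?mul0r //.
Qed.

Lemma alt_vector_id a b u : (forall k, entry u k + a k = k + b k)%N -> alt_vector a b u = 1.
Proof.
move=> u_id; rewrite /alt_vector (bigD1 1%g) //= big1 ?addr0 => [|s s1].
  have -> : matches a b u 1%g by apply/forallP => k; rewrite perm1 u_id.
  by rewrite odd_perm1 expr0 mul1r.
suff -> : matches a b u s = false by rewrite mulr0.
apply: contraNF s1 => /forallP us; apply/eqP/permP => k; apply: val_inj.
by move/eqP: (us k); rewrite u_id perm1 => /addIn.
Qed.

End AlternatingVectors.

Section ShiftKernel.
Variables (R : realFieldType) (m n : nat) (al : 'I_m -> nat).
Hypotheses (n_le : n <= 'C(m, 2)) (sum_al : \sum_k al k = 'C(m, 2) - n).
Implicit Types (u : SRv m n) (x : shift_index m n) (s : 'S_m).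

Definition shift_perm x s :=
  (0 < x.1) && [exists i, [forall k, (s k : nat) == x.2 k + al k + x.1 * (k == i)]].

Lemma card_shift_matches x s :
  #|[pred u | shift_clique x u && matches al (fun=> 0) u s]| = shift_perm x s.
Proof.
rewrite card_le1_exists; last by move=> u v /andP[_ us] /andP[_ vs]; apply: matches_inj us vs.
congr nat_of_bool; apply/existsP/andP => [[u /andP[/andP[t_gt0 /existsP[i ui]] /forallP us]]|].
  split=> //; apply/existsP; exists i; apply/forallP => k.
  by move/in_shiftP/(_ k): ui; move/eqP: (us k); rewrite addn0 => <- ->; rewrite addnAC.
case=> t_gt0 /existsP[i /forallP si].
have [u u_g] : exists u, entry u =1 fun k => x.2 k + x.1 * (k == i).
  apply: exists_vertex; apply/eqP; rewrite -(eqn_add2r ('C(m, 2) - n)) subnKC // -sum_al -big_split /=.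
  by rewrite -(sum_perm s); apply/eqP/eq_bigr => k _; rewrite (eqP (si k)) addnAC.
exists u; rewrite /shift_clique t_gt0; apply/andP; split.
  by apply/existsP; exists i; apply/in_shiftP.
by apply/forallP => k; rewrite u_g (eqP (si k)) addn0 addnAC.
Qed.

Lemma shift_perm_tperm x s p q : x.2 p + al p = x.2 q + al q ->
  shift_perm x s -> shift_perm x (tperm p q * s)%g.
Proof.
move=> pq /andP[t_gt0 /existsP[i /forallP si]]; rewrite /shift_perm t_gt0.
apply/existsP; exists (tperm p q i); apply/forallP => k; rewrite permM (eqP (si _)).
have -> : x.2 (tperm p q k) + al (tperm p q k) = x.2 k + al k.
  by case: tpermP => [->|->|] //; rewrite pq.
by rewrite (canF_eq (tpermK p q)).
Qed.

Lemma shift_perm_collision x s : shift_perm x s ->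
  exists p q, p != q /\ x.2 p + al p = x.2 q + al q.
Proof.
move=> /andP[t_gt0 /existsP[i /forallP si]].
have si_i : s i = x.2 i + al i + x.1 :> nat by rewrite (eqP (si i)) eqxx muln1.
have lt_m : s i - x.1 < m by rewrite (leq_ltn_trans (leq_subr _ _)).
pose j := (s^-1)%g (Ordinal lt_m).
have sj : s j = s i - x.1 :> nat by rewrite /j permKV.
have ji : j != i by apply: contraTneq t_gt0 => ji; move: sj; rewrite ji; lia.
exists i, j; split; first by rewrite eq_sym.
by move/eqP: (si j); rewrite (negbTE ji) muln0 addn0 sj; lia.
Qed.

Lemma shift_clique_sum_alt x : (\sum_(u | shift_clique x u) alt_vector R al (fun=> 0) u = 0)%R.
Proof.
rewrite sum_alt_vector; under eq_bigr => s _ do rewrite card_shift_matches.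
case: (boolP [exists p, exists q, (p != q) && (x.2 p + al p == x.2 q + al q)]).
  case/existsP=> p /existsP[q /andP[pq /eqP pq_eq]].
  apply: (@signed_sum_tperm_invariant _ _ (shift_perm x) _ _ pq) => s.
  apply/idP/idP => [|/(shift_perm_tperm pq_eq)//].
  by move/(shift_perm_tperm pq_eq); rewrite mulgA tperm2 mul1g.
move=> no_collision; apply: big1 => s _.
case: (boolP (shift_perm x s)) => [/shift_perm_collision[p [q [pq pq_eq]]]|]; last by rewrite mulr0.
by case/negP: no_collision; apply/existsP; exists p; apply/existsP; exists q; rewrite pq pq_eq eqxx.
Qed.

End ShiftKernel.

Section PairKernel.
Variables (R : realFieldType) (m n : nat) (be : 'I_m -> nat).
Hypotheses (n_ge : 'C(m, 2) <= n) (sum_be : \sum_k be k = n - 'C(m, 2)).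
Implicit Types (u : SRv m n) (x : pair_index m n) (s : 'S_m).

Definition pair_perm x s :=
  (#|x.1| == 2) && [forall k, if k \in x.1 then x.2 k == ord0 else (x.2 k : nat) == s k + be k].

Lemma card_pair_matches x s :
  #|[pred u | pair_clique x u && matches (fun=> 0) be u s]| = pair_perm x s.
Proof.
rewrite card_le1_exists; last by move=> u v /andP[_ us] /andP[_ vs]; apply: matches_inj us vs.
congr nat_of_bool; apply/existsP/andP => [[u /andP[/andP[x2 /forallP xu] /forallP us]]|].
  split=> //; apply/forallP => k; move: (xu k); case: (k \in x.1) => // /eqP <-.
  by move/eqP: (us k); rewrite addn0 => ->.
case=> x2 /forallP xs.
have [u u_s] : exists u, entry u =1 fun k => s k + be k.
  by apply: exists_vertex; rewrite big_split /= sum_perm sum_be subnKC.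
exists u; rewrite /pair_clique x2; apply/andP; split; apply/forallP => k.
  by move: (xs k); case: (k \in x.1) => // /eqP->; rewrite u_s.
by rewrite u_s addn0.
Qed.

Lemma pair_clique_sum_alt x : (\sum_(u | pair_clique x u) alt_vector R (fun=> 0) be u = 0)%R.
Proof.
rewrite sum_alt_vector; under eq_bigr => s _ do rewrite card_pair_matches.
have [/cards2P[p [q [pq x_pq]]]|not2] := boolP (#|x.1| == 2); last first.
  by apply: big1 => s _; rewrite /pair_perm (negbTE not2) mulr0.
apply: (@signed_sum_tperm_invariant _ _ (pair_perm x) _ _ pq) => s.
rewrite /pair_perm; congr andb; apply: eq_forallb => k.
case: ifP => // /negbT; rewrite x_pq !inE negb_or => /andP[kp kq].
by rewrite permM tpermD // eq_sym.
Qed.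

End PairKernel.

Lemma sum_minn_binom (D K : nat) :
  \sum_(k < K) minn k (D - 'C(k, 2)) = minn D 'C(K, 2).
Proof.
elim: K => [|K IHK]; first by rewrite big_ord0.
by rewrite big_ord_recr /= IHK binS bin1; lia.
Qed.

Lemma exists_sum_le_ord (m D : nat) : D <= 'C(m, 2) ->
  exists al : 'I_m -> nat, (forall k, al k <= k) /\ \sum_k al k = D.
Proof.
move=> D_le; exists (fun k => minn k (D - 'C(k, 2))); split=> [k|]; first exact: geq_minl.
by rewrite sum_minn_binom; apply/minn_idPl.
Qed.

Lemma SR_dim_gt0 (m n : nat) : 0 < #|SRv m n| -> 0 < n -> 0 < m.
Proof.
case/card_gt0P=> u _; rewrite -(sum_entry u); case: m u => // u.
by rewrite big_ord0.
Qed.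

Section SRSpectrum.
Variables (R : realFieldType) (m n : nat).
Local Open Scope ring_scope.

Lemma SR_eigenvalue_ge_opp_n a : eigenvalue (SR_adjmx R m n) a -> - n%:R <= a.
Proof. by move/(blocks_eigenvalue_ge (@common_shift_cliques m n)). Qed.

Lemma SR_eigenvalue_ge_opp_binom a : eigenvalue (SR_adjmx R m n) a -> - 'C(m, 2)%:R <= a.
Proof. by move/(blocks_eigenvalue_ge (@common_pair_cliques m n)). Qed.

Lemma SR_eigenvalue_opp_n : (n <= 'C(m, 2))%N -> eigenvalue (SR_adjmx R m n) (- n%:R).
Proof.
move=> n_le; have [al [al_le sum_al]] := exists_sum_le_ord (leq_subr n 'C(m, 2)).
have [u0 u0_id] : exists u0 : SRv m n, entry u0 =1 fun k => (k - al k)%N.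
  apply: exists_vertex; apply/eqP; rewrite -(eqn_add2r ('C(m, 2) - n)) subnKC // -sum_al -big_split /=.
  by rewrite -sum_ord_id; apply/eqP/eq_bigr => k _; rewrite subnK.
apply: (blocks_kernel_eigenvalue (@common_shift_cliques m n)
  (X := alt_vector R al (fun=> 0%N)) (u0 := u0)).
  by rewrite alt_vector_id ?oner_neq0 // => k; rewrite u0_id addn0 subnK.
exact: shift_clique_sum_alt.
Qed.

Lemma SR_eigenvalue_opp_binom : (0 < m)%N -> ('C(m, 2) <= n)%N ->
  eigenvalue (SR_adjmx R m n) (- 'C(m, 2)%:R).
Proof.
move=> m_gt0 n_ge; pose k0 := Ordinal m_gt0.
pose be k := ((n - 'C(m, 2)) * (k == k0))%N.
have sum_be : (\sum_k be k)%N = (n - 'C(m, 2))%N.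
  by rewrite (bigD1 k0) //= big1 ?addn0 => [|k /negbTE k_k0]; rewrite /be ?eqxx ?muln1 ?k_k0 ?muln0.
have [u0 u0_id] : exists u0 : SRv m n, entry u0 =1 fun k => (k + be k)%N.
  by apply: exists_vertex; rewrite big_split /= sum_be sum_ord_id subnKC.
apply: (blocks_kernel_eigenvalue (@common_pair_cliques m n)
  (X := alt_vector R (fun=> 0%N) be) (u0 := u0)).
  by rewrite alt_vector_id ?oner_neq0 // => k; rewrite u0_id addn0.
exact: pair_clique_sum_alt.
Qed.

End SRSpectrum.

Local Open Scope ring_scope.

Theorem proposition2 (R : rcfType) (m n : nat) :
  (0 < #|SRv m n|)%N ->
  smallest_eigenvalue (SR_adjmx R m n)
    (Num.max (- (n%:R)) (- ('C(m, 2)%:R))).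
Proof.
move=> SR_nonempty; split; last first.
  by move=> a ea; rewrite ge_max (SR_eigenvalue_ge_opp_n ea) (SR_eigenvalue_ge_opp_binom ea).
have [n_le | binom_lt] := leqP n 'C(m, 2).
  have -> : Num.max (- n%:R) (- 'C(m, 2)%:R) = - n%:R :> R.
    by apply/max_idPl; rewrite lerN2 ler_nat.
  exact: SR_eigenvalue_opp_n.
have -> : Num.max (- n%:R) (- 'C(m, 2)%:R) = - 'C(m, 2)%:R :> R.
  by apply/max_idPr; rewrite lerN2 ler_nat ltnW.
apply: SR_eigenvalue_opp_binom (ltnW binom_lt).
by apply: SR_dim_gt0 SR_nonempty _; apply: leq_ltn_trans binom_lt.
Qed.
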